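(* If $M=\mathbb R^n$ with the Euclidean metric, then $\dim_{P(\mathit{unc})}(E)=\dim_P(E)$ for every $E\subset\mathbb R^n$.
   Context: $|A|$ denotes diameter. An $\varepsilon$-packing of $E$ is a finite or countable family of pairwise disjoint open balls of diameter $\le\varepsilon$ with centers in $E$; an uncentered $\varepsilon$-packing is the same but with the center condition replaced by ''each ball meets $E$''. For $\alpha\ge0$: $\mathcal P^\alpha_\varepsilon(E)=\sup\sum_i|E_i|^\alpha$ over $\varepsilon$-packings, $\mathcal P^\alpha_0(E)=\lim_{\varepsilon\to0}\mathcal P^\alpha_\varepsilon(E)$, $\mathcal P^\alpha(E)=\inf\{\sum_j\mathcal P^\alpha_0(E_j):E\subset\bigcup_jE_j\}$ over countable covers, $\dim_P(E)=\inf\{\alpha:\mathcal P^\alpha(E)=0\}$; $\dim_{P(\mathit{unc})}$ is defined identically with uncentered packings. *)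

From HB Require Import structures.
From mathcomp Require Import all_boot all_order all_algebra.
From mathcomp Require Import all_classical all_reals all_analysis.
Set Implicit Arguments.
Unset Strict Implicit.
Unset Printing Implicit Defensive.
Import Order.TTheory GRing.Theory Num.Theory.
Local Open Scope classical_set_scope.
Local Open Scope ring_scope.

Section PackingDim.
Variables (R : realType) (n : nat).
Local Notation pt := 'rV[R]_n.

Definition edist (x y : pt) : R := Num.sqrt (\sum_(i < n) (x 0 i - y 0 i) ^+ 2).

Definition eball (c : pt) (r : R) : set pt := [set y | edist c y < r].

(* diameter |A| (used for balls, which are nonempty and bounded) *)
Definition diam (A : set pt) : R := sup [set edist p.1 p.2 | p in A `*` A].

(* A packing: a finite or countable family, indexed by I ⊆ nat, of pairwise
   disjoint open balls B(c i, r i) (r i > 0) of diameter <= eps.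
   [centered = true]: centers in E; [centered = false]: each ball meets E. *)
Definition is_packing (centered : bool) (eps : R) (E : set pt)
    (I : set nat) (c : nat -> pt) (r : nat -> R) : Prop :=
  (forall i, I i -> 0 < r i) /\
  (forall i, I i -> diam (eball (c i) (r i)) <= eps) /\
  (forall i j, I i -> I j -> i <> j -> eball (c i) (r i) `&` eball (c j) (r j) = set0) /\
  (forall i, I i -> if centered then E (c i) else eball (c i) (r i) `&` E !=set0).

Local Open Scope ereal_scope.

Definition Peps (centered : bool) (alpha eps : R) (E : set pt) : \bar R :=
  ereal_sup [set s | exists I c r, is_packing centered eps E I c r /\
      s = \esum_(i in I) ((diam (eball (c i) (r i))) `^ alpha)%:E].

Definition P0 (centered : bool) (alpha : R) (E : set pt) : \bar R :=
  lim (Peps centered alpha eps E @[eps --> 0^'+]).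

Definition Pmeas (centered : bool) (alpha : R) (E : set pt) : \bar R :=
  ereal_inf [set s | exists F : nat -> set pt, E `<=` \bigcup_j F j /\
      s = \sum_(0 <= j <oo) P0 centered alpha (F j)].

Definition dimP_gen (centered : bool) (E : set pt) : \bar R :=
  ereal_inf [set a%:E | a in [set a : R | (0 <= a)%R /\ Pmeas centered a E = 0]].

Definition dimP (E : set pt) := dimP_gen true E.
Definition dimP_unc (E : set pt) := dimP_gen false E.

End PackingDim.

From mathcomp Require Import all_boot all_order all_algebra.
From mathcomp Require Import all_classical all_reals all_analysis.
From mathcomp Require Import ring lra zify.

(* Every centred packing is an uncentred one, so [dimP E <= dimP_unc E].
   Conversely let [Pmeas true al E = 0] and [al < be]; cover [E] by sets [F] with
   [P0 true al F < 1], so that centred [e0]-packings of [F] have [al]-sum below [1]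
   for some [e0 > 0]. Given an uncentred [e]-packing of [F] with [e <= e0], sort its
   balls into dyadic classes of radius about [w = e 2^-k] and pick a point of [F] in
   each ball. A maximal [w]-separated set of these points carries a centred packing,
   hence has at most [w^-al] elements, and by grid counting each of its points is
   within [O(w)] of at most [(12 n + 1)^n] of the disjoint balls. The [k]-th class thus
   contributes [O(w^(be - al))], and the geometric series gives
   [Peps false be e F = O(e^(be - al))], so [P0 false be F = 0]. *)

Set Implicit Arguments.
Unset Strict Implicit.
Unset Printing Implicit Defensive.
Import Order.TTheory GRing.Theory Num.Theory.
Local Open Scope classical_set_scope.
Local Open Scope ring_scope.

Lemma sum_mul_le_sqrt (R : rcfType) (I : finType) (a b : I -> R) :
  \sum_i a i * b i <= Num.sqrt (\sum_i a i ^+ 2) * Num.sqrt (\sum_i b i ^+ 2).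
Proof.
set SA := \sum_i a i ^+ 2; set SB := \sum_i b i ^+ 2.
have sqr_sum_eq0 (f : I -> R) : \sum_i f i ^+ 2 = 0 -> forall i, f i = 0.
  move=> f0 i; apply/eqP; rewrite -sqrf_eq0; apply/eqP.
  exact: (psumr_eq0P (fun j _ => sqr_ge0 (f j)) f0).
have [SA0|SAn0] := eqVneq SA 0.
  by rewrite big1 ?mulr_ge0 ?sqrtr_ge0 // => i _; rewrite (sqr_sum_eq0 a SA0) mul0r.
have [SB0|SBn0] := eqVneq SB 0.
  by rewrite big1 ?mulr_ge0 ?sqrtr_ge0 // => i _; rewrite (sqr_sum_eq0 b SB0) mulr0.
set A := Num.sqrt SA; set B := Num.sqrt SB.
have SA_gt0 : 0 < SA by rewrite lt_neqAle eq_sym SAn0 sumr_ge0 // => i _; exact: sqr_ge0.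
have SB_gt0 : 0 < SB by rewrite lt_neqAle eq_sym SBn0 sumr_ge0 // => i _; exact: sqr_ge0.
have A_gt0 : 0 < A by rewrite sqrtr_gt0.
have B_gt0 : 0 < B by rewrite sqrtr_gt0.
(* weighted AM-GM, with weights chosen so that both sides sum to [A * B] *)
have am_gm i : a i * b i <= (B / A) * a i ^+ 2 / 2 + (A / B) * b i ^+ 2 / 2.
  rewrite -subr_ge0.
  have -> : (B / A) * a i ^+ 2 / 2 + (A / B) * b i ^+ 2 / 2 - a i * b i
           = (B * a i - A * b i) ^+ 2 / (2 * A * B).
    by field; rewrite ?gt_eqF.
  by rewrite divr_ge0 ?sqr_ge0 // !mulr_ge0 // ltW.
apply: (le_trans (ler_sum _ (fun i _ => am_gm i))).
rewrite big_split /= -!mulr_suml -!mulr_sumr -/SA -/SB.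
have AA : A ^+ 2 = SA by rewrite sqr_sqrtr // ltW.
have BB : B ^+ 2 = SB by rewrite sqr_sqrtr // ltW.
suff -> : B / A * SA / 2 + A / B * SB / 2 = A * B by [].
by rewrite -AA -BB; field; rewrite ?gt_eqF.
Qed.

Section Euclidean.
Variables (R : realType) (n : nat).
Local Notation pt := 'rV[R]_n.

Lemma edist_sym (x y : pt) : edist x y = edist y x.
Proof. by rewrite /edist; congr Num.sqrt; apply: eq_bigr => i _; ring. Qed.

Lemma edistxx (x : pt) : edist x x = 0.
Proof. by rewrite /edist big1 ?sqrtr0 // => i _; rewrite subrr expr0n. Qed.

Lemma edist_triangle (x y z : pt) : edist x z <= edist x y + edist y z.
Proof.
rewrite /edist.
set a := fun i => x 0 i - y 0 i; set b := fun i => y 0 i - z 0 i.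
have sum_sqr_ge0 (f : 'I_n -> R) : 0 <= \sum_i f i ^+ 2.
  by apply: sumr_ge0 => i _; exact: sqr_ge0.
have -> : \sum_i (x 0 i - z 0 i) ^+ 2 = \sum_i (a i + b i) ^+ 2.
  by apply: eq_bigr => i _; rewrite /a /b; congr (_ ^+ 2); ring.
rewrite -(ler_pXn2r (n := 2)) // ?nnegrE ?addr_ge0 ?sqrtr_ge0 //.
rewrite sqrrD !sqr_sqrtr ?sum_sqr_ge0 // mulr2n.
have -> : \sum_i (a i + b i) ^+ 2
          = \sum_i a i ^+ 2 + 2 * \sum_i a i * b i + \sum_i b i ^+ 2.
  by rewrite mulr_sumr -!big_split /=; apply: eq_bigr => i _; ring.
have := sum_mul_le_sqrt a b; lra.
Qed.

Lemma coord_le_edist (x y : pt) i : `|x 0 i - y 0 i| <= edist x y.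
Proof.
rewrite /edist -sqrtr_sqr ler_sqrt; last by apply: sumr_ge0 => j _; exact: sqr_ge0.
by rewrite (bigD1 i) //= lerDl; apply: sumr_ge0 => j _; exact: sqr_ge0.
Qed.

Lemma edist_addr (x u : pt) : edist x (x + u) = Num.sqrt (\sum_i u 0 i ^+ 2).
Proof. by rewrite /edist; congr Num.sqrt; apply: eq_bigr => i _; rewrite mxE; ring. Qed.

Let diam_set (c : pt) r := [set edist p.1 p.2 | p in eball c r `*` eball c r].

Lemma diam_set0 (c : pt) r : 0 < r -> diam_set c r 0.
Proof. by move=> r0; exists (c, c); rewrite /= ?edistxx //; split; rewrite /eball /= edistxx. Qed.

Lemma diam_set_ub (c : pt) r : ubound (diam_set c r) (2 * r).
Proof.
move=> _ [[p q] [/= pc qc] <-] /=; move: pc qc; rewrite /eball /= => pc qc.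
by have := edist_triangle p c q; rewrite (edist_sym p c); lra.
Qed.

Lemma diam_eball_le (c : pt) r : 0 < r -> diam (eball c r) <= 2 * r.
Proof. by move=> r0; apply: ge_sup; [exists 0; exact: diam_set0 | exact: diam_set_ub]. Qed.

Lemma diam_eball_ub (c : pt) r d : 0 < r -> diam_set c r d -> d <= diam (eball c r).
Proof.
move=> r0 dc; apply: sup_upper_bound => //; split; first by exists 0; exact: diam_set0.
by exists (2 * r); exact: diam_set_ub.
Qed.

Lemma diam_eball_ge0 (c : pt) r : 0 < r -> 0 <= diam (eball c r).
Proof. by move=> r0; apply: diam_eball_ub => //; exact: diam_set0. Qed.

Lemma diam_eball_dim0 (c : pt) r : n = 0%N -> 0 < r -> diam (eball c r) = 0.
Proof.
move=> n0 r0; apply/eqP; rewrite eq_le diam_eball_ge0 // andbT.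
apply: ge_sup; first by exists 0; exact: diam_set0.
by move=> _ [[p q] _ <-]; rewrite /edist /=; move: p q; rewrite n0 => p q; rewrite big_ord0 sqrtr0.
Qed.

(* witnessed by the endpoints [c + u], [c - u] of a diameter, [u = t e_0] *)
Lemma eball_diam_ge (c : pt) r t : (0 < n)%N -> 0 < t < r -> 2 * t <= diam (eball c r).
Proof.
move=> n_gt0 /andP[t0 tr].
pose u : pt := t *: delta_mx 0 (Ordinal n_gt0).
have sum_u : \sum_i u 0 i ^+ 2 = t ^+ 2.
  rewrite (bigD1 (Ordinal n_gt0)) //= big1 ?addr0; last first.
    by move=> j /negbTE ji; rewrite /u !mxE ji andbF mulr0 expr0n.
  by rewrite /u !mxE !eqxx mulr1.
have in_ball (v : pt) : \sum_i v 0 i ^+ 2 = t ^+ 2 -> eball c r (c + v).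
  by move=> sv; rewrite /eball /= edist_addr sv sqrtr_sqr gtr0_norm.
apply: diam_eball_ub; first exact: lt_trans tr.
exists (c + u, c - u).
  split; first exact: in_ball.
  by apply: in_ball; rewrite -sum_u; apply: eq_bigr => i _; rewrite mxE sqrrN.
rewrite /= (_ : c - u = (c + u) + (- 2) *: u); last by apply/rowP => i; rewrite !mxE; ring.
rewrite edist_addr (_ : \sum_i ((- 2) *: u) 0 i ^+ 2 = (2 * t) ^+ 2).
  by rewrite sqrtr_sqr gtr0_norm // mulr_gt0.
by rewrite exprMn -sum_u mulr_sumr; apply: eq_bigr => i _; rewrite mxE; ring.
Qed.

Lemma diam_eball (c : pt) r : (0 < n)%N -> 0 < r -> diam (eball c r) = 2 * r.
Proof.
move=> n_gt0 r0; apply/eqP; rewrite eq_le diam_eball_le //=.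
rewrite leNgt; apply/negP => dr.
have d0 := diam_eball_ge0 c r0.
set d := diam _ in dr d0.
have : 2 * ((d / 2 + r) / 2) <= d by apply: eball_diam_ge => //; apply/andP; split; lra.
lra.
Qed.

End Euclidean.

Lemma floor_subr_bound (R : realType) (a b : R) (m : nat) : `|a - b| < m%:R ->
  (- (m%:Z) <= Num.floor a - Num.floor b) && (Num.floor a - Num.floor b <= m%:Z).
Proof.
move=> /[!ltr_norml] /andP[ab1 ab2].
have /andP[a1 a2] := floor_itv a; have /andP[b1 b2] := floor_itv b.
rewrite rmorphD /= in a2 b2.
have ub : Num.floor a - Num.floor b < m%:Z + 1.
  by rewrite -(ltr_int R) rmorphB rmorphD /=; lra.
have lb : - (m%:Z) - 1 < Num.floor a - Num.floor b.
  by rewrite -(ltr_int R) !rmorphB /= rmorphN /=; lra.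
by apply/andP; split; lia.
Qed.

Lemma floor_mid_dist (R : realType) (h y : R) : 0 < h ->
  `|y - h * ((Num.floor (y / h))%:~R + 2^-1)| <= h / 2.
Proof.
move=> h0; have /andP[f1 f2] := floor_itv (y / h); rewrite rmorphD /= in f2.
set F := ((Num.floor (y / h))%:~R : R) in f1 f2 *.
have -> : y = h * (y / h) by field; rewrite gt_eqF.
set t := y / h in f1 f2 *.
rewrite ler_norml; apply/andP; split; nra.
Qed.

Section Grid.
Variables (R : realType) (n : nat).
Local Notation pt := 'rV[R]_n.

Definition cell_center (h : R) (z : pt) : pt :=
  \row_l (h * ((Num.floor (z 0 l / h))%:~R + 2^-1)).

(* the cells of side [s / n] have diameter [s / sqrt n < s] *)
Lemma edist_cell_center (s : R) (x z : pt) : (0 < n)%N -> 0 < s ->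
  (forall l, Num.floor (x 0 l / (s / n%:R)) = Num.floor (z 0 l / (s / n%:R))) ->
  edist x (cell_center (s / n%:R) z) < s.
Proof.
move=> n_gt0 s0 same_cell.
have nR : (0 : R) < n%:R by rewrite ltr0n.
set h := s / n%:R; have h0 : 0 < h by exact: divr_gt0.
have sum_le : \sum_l (x 0 l - cell_center h z 0 l) ^+ 2 <= n%:R * (h / 2) ^+ 2.
  rewrite -[n in X in _ <= X * _]card_ord -sum1_card natr_sum mulr_suml.
  apply: ler_sum => l _; rewrite mul1r mxE -same_cell -real_normK ?num_real //.
  by rewrite lerXn2r ?nnegrE ?floor_mid_dist // divr_ge0 // ltW.
have lt_s2 : n%:R * (h / 2) ^+ 2 < s ^+ 2.
  rewrite /h (_ : n%:R * (s / n%:R / 2) ^+ 2 = s ^+ 2 / (4 * n%:R)); last first.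
    by field; rewrite gt_eqF.
  rewrite ltr_pdivrMr ?mulr_gt0 // ltr_pMr ?exprn_gt0 //.
  have : (1 : R) <= n%:R by rewrite ler1n.
  lra.
rewrite /edist -[X in _ < X](gtr0_norm s0) -sqrtr_sqr ltr_sqrt ?exprn_gt0 //.
exact: le_lt_trans sum_le lt_s2.
Qed.

(* code [c i] by its grid cell of side [s / n] relative to the cell of [y]; two balls
   coded alike would both contain the centre of that cell *)
Lemma size_disjoint_eballs_near (u : seq nat) (c : nat -> pt) (s : R) (y : pt) :
  (0 < n)%N -> 0 < s -> uniq u ->
  (forall i j, i \in u -> j \in u -> i <> j -> eball (c i) s `&` eball (c j) s = set0) ->
  (forall i, i \in u -> edist (c i) y < 6 * s) ->
  (size u <= (12 * n).+1 ^ n)%N.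
Proof.
move=> n_gt0 s0 uniq_u disj near.
have nR : (0 : R) < n%:R by rewrite ltr0n.
set h := s / n%:R; have h0 : 0 < h by exact: divr_gt0.
pose D i l := Num.floor (c i 0 l / h) - Num.floor (y 0 l / h).
have D_bound i l : i \in u -> (- ((6 * n)%N%:Z) <= D i l) && (D i l <= (6 * n)%N%:Z).
  move=> iu; apply: floor_subr_bound.
  rewrite -mulrBl normrM (gtr0_norm (x := h^-1)) ?invr_gt0 // ltr_pdivrMr //.
  apply: le_lt_trans (coord_le_edist _ _ _) _.
  by rewrite /h natrM (_ : 6%:R * n%:R * (s / n%:R) = 6 * s) ?near //; field; rewrite gt_eqF.
pose k i l := absz (D i l + (6 * n)%N%:Z).
have kE i l : i \in u -> (k i l)%:Z = D i l + (6 * n)%N%:Z.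
  by move=> iu; rewrite /k gez0_abs //; have := D_bound i l iu; lia.
have k_lt i l : i \in u -> (k i l < (12 * n).+1)%N.
  by move=> iu; have := D_bound i l iu; have := kE i l iu; lia.
pose code i : {ffun 'I_n -> 'I_((12 * n).+1)} := [ffun l => inord (k i l)].
have code_inj : {in u &, injective code}.
  move=> i j iu ju code_ij; apply: contrapT => ij.
  have same_cell l : Num.floor (c j 0 l / h) = Num.floor (c i 0 l / h).
    have := congr1 (fun f : {ffun 'I_n -> 'I_((12 * n).+1)} => nat_of_ord (f l)) code_ij.
    rewrite !ffunE !inordK ?k_lt // => kij.
    by have := kE i l iu; have := kE j l ju; rewrite kij /D; lia.
  have := disj i j iu ju ij; apply/eqP/set0P.
  exists (cell_center h (c i)); split; rewrite /eball /=; apply: edist_cell_center => //.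
rewrite -(size_map code) -(card_uniqP _); last by rewrite map_inj_in_uniq.
by rewrite (leq_trans (max_card _)) // card_ffun !card_ord.
Qed.

End Grid.

Lemma greedy_net (T : eqType) (near : rel T) (s : seq T) :
  symmetric near -> reflexive near -> uniq s ->
  exists t : seq T, [/\ uniq t, {subset t <= s},
    (forall i j, i \in t -> j \in t -> i <> j -> ~~ near i j) &
    (forall i, i \in s -> has (near i) t)].
Proof.
move=> near_sym near_refl; elim: s => [|a s IH] /=; first by exists [::].
move=> /andP[a_notin_s /IH[t [uniq_t sub_t far_t cover_t]]].
have [a_covered|a_far] := boolP (has (near a) t).
  exists t; split => //; first by move=> x xt; rewrite inE sub_t ?orbT.
  by move=> i; rewrite inE => /orP[/eqP ->|/cover_t].
exists (a :: t); split.
- by rewrite /= uniq_t andbT; apply: contra a_notin_s => /sub_t.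
- by move=> x; rewrite !inE => /orP[->|/sub_t ->]; rewrite ?orbT.
- have far_a j : j \in t -> ~~ near a j.
    by move=> jt; apply: contra a_far => aj; apply/hasP; exists j.
  move=> i j; rewrite !inE => /orP[/eqP ->|it] /orP[/eqP ->|jt] ij //.
  + exact: far_a.
  + by rewrite near_sym far_a.
  + exact: far_t.
- by move=> i; rewrite inE /= => /orP[/eqP ->|/cover_t ->]; rewrite ?near_refl ?orbT.
Qed.

Lemma size_le_cover (T : eqType) (P : T -> T -> bool) (s t : seq T) (K : nat) :
  (forall i, i \in s -> has (P i) t) ->
  (forall j, j \in t -> (count (P^~ j) s <= K)%N) ->
  (size s <= size t * K)%N.
Proof.
move=> cover load.
have count_sum (Q : pred T) (l : seq T) : count Q l = \sum_(x <- l) (Q x : nat).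
  by elim: l => [|x l IHl]; rewrite ?big_nil // big_cons /= IHl.
apply: (@leq_trans (\sum_(i <- s) count (P i) t)).
  rewrite -sum1_size big_seq [X in (_ <= X)%N]big_seq; apply: leq_sum => i is_.
  by rewrite -has_count cover.
under eq_bigr => i _ do rewrite count_sum.
rewrite exchange_big /= -sum1_size big_distrl /= big_seq [X in (_ <= X)%N]big_seq.
by apply: leq_sum => j jt; rewrite mul1n -count_sum load.
Qed.

Section PackingMeasures.
Variables (R : realType) (n : nat).
Local Notation pt := 'rV[R]_n.
Implicit Types (centered : bool) (E : set pt).

Lemma le_Peps centered al e1 e2 E : e1 <= e2 ->
  (Peps centered al e1 E <= Peps centered al e2 E)%E.
Proof.
move=> e12; apply: ereal_sup_le => _ [I [c [r [[r0 [diam_le [disj meet]]] ->]]]].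
exists I, c, r; split => //; split => //; split => // i Ii.
exact: le_trans (diam_le i Ii) e12.
Qed.

Lemma Peps_ge0 centered al e E : (0 <= Peps centered al e E)%E.
Proof.
apply: ereal_sup_ubound; exists set0, (fun _ => 0), (fun _ => 1).
by split; [do !split | rewrite esum_set0].
Qed.

Lemma P0E centered al E :
  P0 centered al E = ereal_inf [set Peps centered al e E | e in `]0, +oo[].
Proof.
apply: cvg_lim => //; apply: nondecreasing_at_right_cvge => // x y _ _.
exact: le_Peps.
Qed.

Lemma P0_le_Peps centered al e E : 0 < e -> (P0 centered al E <= Peps centered al e E)%E.
Proof. by move=> e0; rewrite P0E; apply: ereal_inf_lbound; exists e; rewrite //= in_itv /= e0. Qed.

Lemma P0_ge0 centered al E : (0 <= P0 centered al E)%E.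
Proof. by rewrite P0E; apply/ereal_infP => _ [e _ <-]; exact: Peps_ge0. Qed.

Lemma P0_lt_Peps centered al E (x : \bar R) : (P0 centered al E < x)%E ->
  exists2 e, 0 < e & (Peps centered al e E < x)%E.
Proof.
rewrite P0E => /ereal_inf_lt[y [e /=]]; rewrite in_itv /= andbT => e0 <- Pe_lt.
by exists e.
Qed.

Lemma Peps_centered_le al e E : (Peps true al e E <= Peps false al e E)%E.
Proof.
apply: ereal_sup_le => _ [I [c [r [[r0 [diam_le [disj center_in]]] ->]]]].
exists I, c, r; split => //; split => //; split => //; split => // i Ii /=.
by exists (c i); split; [rewrite /eball /= edistxx; exact: r0 | exact: center_in].
Qed.

Lemma P0_centered_le al E : (P0 true al E <= P0 false al E)%E.
Proof.
rewrite [P0 false _ _]P0E; apply/ereal_infP => y [e /=]; rewrite in_itv /= andbT => e0 <-.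
exact: le_trans (P0_le_Peps _ _ _ e0) (Peps_centered_le _ _ _).
Qed.

Lemma Pmeas_ge0 centered al E : (0 <= Pmeas centered al E)%E.
Proof. by apply/ereal_infP => _ [F [_ ->]]; apply: nneseries_ge0 => j _ _; exact: P0_ge0. Qed.

Lemma Pmeas_centered_le al E : (Pmeas true al E <= Pmeas false al E)%E.
Proof.
apply/ereal_infP => _ [F [cover ->]]; apply: ge_ereal_inf.
exists (\sum_(0 <= j <oo) P0 true al (F j))%E; first by exists F.
by apply: lee_nneseries => j *; [exact: P0_ge0 | exact: P0_centered_le].
Qed.

End PackingMeasures.

Lemma dyadic_bucket (R : realType) (e r : R) : 0 < e -> 0 < r -> r <= e / 2 ->
  exists k, e * 2^-1 ^+ k / 4 < r /\ r <= e * 2^-1 ^+ k / 2.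
Proof.
move=> e0 r0 re.
pose P m := e * 2^-1 ^+ m / 2 < r.
have [m0 Pm0] : exists m, P m.
  (* [2 ^ m >= m + 1 > e / r] for [m = truncn (e / r)] *)
  exists (Num.truncn (e / r)); set m := Num.truncn _.
  have e_lt : e < r * m.+1%:R by rewrite -ltr_pdivrMl // mulrC truncnS_gt.
  have m_le : (m.+1%:R : R) <= 2 ^+ m by rewrite -natrX ler_nat ltn_expl.
  have half_m : 2^-1 ^+ m * 2 ^+ m = 1 :> R by rewrite -exprMn mulVf // expr1n.
  have half_m0 : 0 < 2^-1 ^+ m :> R by rewrite exprn_gt0.
  rewrite /P; set h := 2^-1 ^+ m in half_m half_m0 *.
  set M := (m.+1%:R : R) in e_lt m_le *; set Q := 2 ^+ m in m_le half_m.
  have hM : h * M <= 1 by rewrite -half_m ler_wpM2l // ltW.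
  nra.
case: (ex_minnP (ex_intro P m0 Pm0)) => m Pm min_m.
have m_gt0 : (0 < m)%N.
  by rewrite lt0n; apply/eqP => m0'; move: Pm; rewrite /P m0' expr0 mulr1; lra.
exists m.-1; split.
  move: Pm; rewrite /P -(prednK m_gt0) exprS.
  have : 0 <= 2^-1 ^+ m.-1 :> R by rewrite exprn_ge0.
  nra.
by rewrite leNgt; apply/negP => /min_m; rewrite -ltnS prednK // ltnn.
Qed.

Lemma geometric_sum_le (R : realFieldType) (q : R) (N : nat) : 0 <= q < 1 ->
  \sum_(k < N) q ^+ k <= (1 - q)^-1.
Proof.
move=> /andP[q0 q1].
have telescope : (\sum_(k < N) q ^+ k) * (1 - q) = 1 - q ^+ N.
  rewrite mulr_suml; elim: N => [|N IH]; first by rewrite big_ord0 expr0 subrr.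
  by rewrite big_ord_recr /= IH exprS; ring.
by rewrite -[X in _ <= X]mul1r ler_pdivlMr ?subr_gt0 // telescope gerBl exprn_ge0.
Qed.

Lemma sumr_nat_count (R : pzSemiRingType) (P : pred nat) (c : R) (s : seq nat) :
  \sum_(i <- s) (P i)%:R * c = (count P s)%:R * c.
Proof.
elim: s => [|a s IH]; first by rewrite big_nil mul0r.
by rewrite big_cons IH /= natrD mulrDl.
Qed.

Lemma powR_mul_halfX (R : realType) (e g : R) (k : nat) : 0 <= e ->
  (e * 2^-1 ^+ k) `^ g = e `^ g * (2^-1 `^ g) ^+ k.
Proof.
move=> e0; have h0 : (0 : R) <= 2^-1 by rewrite invr_ge0.
by rewrite powRM ?exprn_ge0 // -(powR_mulrn k h0) -(powR_mulrn k (powR_ge0 _ _)) powRAC.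
Qed.

Lemma halfpowR_lt1 (R : realType) (g : R) : 0 < g -> 2^-1 `^ g < 1.
Proof.
move=> g_gt0; have := @gt0_ltr_powR R g g_gt0 2^-1 1; rewrite powR1.
by apply; rewrite ?nnegrE ?invr_ge0 ?invf_lt1 ?ltr1n.
Qed.

Lemma bounded_witnesses (T : eqType) (P : T -> nat -> Prop) (s : seq T) :
  (forall i, i \in s -> exists k, P i k) ->
  exists N, forall i, i \in s -> exists2 k, (k < N)%N & P i k.
Proof.
elim: s => [|a s IH] wit; first by exists 0%N.
have [N HN] := IH (fun i is_ => wit i (@mem_behead _ (a :: s) i is_)).
have [k Pak] := wit a (mem_head _ _).
exists (maxn N k.+1) => i; rewrite inE => /orP[/eqP ->|is_].
  by exists k; rewrite // leq_max ltnSn orbT.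
by have [k' k'N Pk'] := HN i is_; exists k'; rewrite // leq_max k'N.
Qed.

Section UncenteredBound.
Variables (R : realType) (n : nat) (F : set 'rV[R]_n) (al e0 : R).
Local Notation pt := 'rV[R]_n.
Hypotheses (n_gt0 : (0 < n)%N) (al_ge0 : 0 <= al) (Peps_lt1 : (Peps true al e0 F < 1)%E).

Let K : R := ((12 * n).+1 ^ n)%:R.

Lemma separated_size_le (rho : R) (t : seq nat) (x : nat -> pt) :
  0 < rho -> 2 * rho <= e0 -> uniq t -> (forall j, j \in t -> F (x j)) ->
  (forall i j, i \in t -> j \in t -> i <> j -> 2 * rho <= edist (x i) (x j)) ->
  (size t)%:R * (2 * rho) `^ al <= 1.
Proof.
move=> rho0 rho_le uniq_t xF sep.
have pack : is_packing true e0 F [set` t] x (fun _ => rho).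
  split => //; split; first by move=> i _; rewrite diam_eball.
  split => // i j /= it jt ij; apply/seteqP; split => // y [].
  rewrite /eball /= => yi yj.
  have := sep i j it jt ij; have := edist_triangle (x i) y (x j).
  by rewrite (edist_sym y); lra.
have esum_le : (\esum_(i in [set` t]) ((diam (eball (x i) rho)) `^ al)%:E
                 <= Peps true al e0 F)%E.
  by apply: ereal_sup_ubound; exists [set` t], x, (fun _ => rho).
have := le_lt_trans esum_le Peps_lt1.
rewrite esum_fset; [|exact: finite_seq|by move=> i _; rewrite lee_fin powR_ge0].
rewrite -fsbig_seq // sumEFin lte_fin.
under eq_bigr => i _ do rewrite diam_eball //.
by rewrite big_const_seq count_predT iter_addr_0 => lt1; rewrite mulr_natl ltW.
Qed.

(* a maximal [2 rho]-separated subfamily of the points [x i] is a centred packing,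
   and each of its points is close to at most [K] of the disjoint balls *)
Lemma bucket_size_le (rho : R) (s : seq nat) (c x : nat -> pt) (r : nat -> R) :
  0 < rho -> 2 * rho <= e0 -> uniq s ->
  (forall i j, i \in s -> j \in s -> i <> j -> eball (c i) (r i) `&` eball (c j) (r j) = set0) ->
  (forall i, i \in s -> [/\ rho / 2 < r i, r i <= rho, F (x i) & edist (c i) (x i) < r i]) ->
  (size s)%:R * (2 * rho) `^ al <= K.
Proof.
move=> rho0 rho_le uniq_s disj hs.
pose near i j := edist (x i) (x j) < 2 * rho.
have near_sym : symmetric near by move=> i j; rewrite /near edist_sym.
have near_refl : reflexive near by move=> i; rewrite /near edistxx mulr_gt0.
have [t [uniq_t sub_t far_t cover_t]] := greedy_net near_sym near_refl uniq_s.
have size_s : (size s <= size t * (12 * n).+1 ^ n)%N.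
  apply: (size_le_cover cover_t) => j jt; rewrite -size_filter.
  apply: (@size_disjoint_eballs_near _ _ _ c (rho / 2) (x j)) => //.
  - exact: divr_gt0.
  - exact: filter_uniq.
  - move=> i i'; rewrite !mem_filter => /andP[_ is_] /andP[_ is'] ii'.
    apply/seteqP; split => // y []; rewrite /eball /= => yi yi'.
    have [ri _ _ _] := hs i is_; have [ri' _ _ _] := hs i' is'.
    have /seteqP[/(_ y) y_notin _] := disj i i' is_ is' ii'.
    by apply: y_notin; split; rewrite /eball /=; lra.
  - move=> i; rewrite mem_filter => /andP[near_ij is_]; have [_ ri _ xi] := hs i is_.
    by have := edist_triangle (c i) (x i) (x j); rewrite /near in near_ij; lra.
have t_le : (size t)%:R * (2 * rho) `^ al <= 1.
  apply: (@separated_size_le _ t x) => //.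
    by move=> j jt; have [_ _ xF _] := hs j (sub_t j jt).
  by move=> i j it jt ij; rewrite leNgt; exact: far_t.
apply: le_trans (_ : (size t * (12 * n).+1 ^ n)%:R * (2 * rho) `^ al <= K).
  by rewrite ler_wpM2r ?powR_ge0 // ler_nat.
rewrite natrM -/K mulrAC -[X in _ <= X]mul1r ler_wpM2r //.
Qed.

Lemma bucket_sum_le (be w : R) (s : seq nat) (c x : nat -> pt) (r : nat -> R)
    (P := fun i => (w / 4 < r i) && (r i <= w / 2)) :
  al <= be -> 0 < w -> w <= e0 -> uniq s ->
  (forall i j, i \in s -> j \in s -> i <> j -> eball (c i) (r i) `&` eball (c j) (r j) = set0) ->
  (forall i, i \in s -> F (x i) /\ edist (c i) (x i) < r i) ->
  (count P s)%:R * w `^ be <= K * w `^ (be - al).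
Proof.
move=> al_le w0 w_le uniq_s disj hs.
have -> : w `^ be = w `^ (be - al) * w `^ al.
  by rewrite -powRD ?(gt_eqF w0) ?implybT // subrK.
rewrite mulrCA [K * _]mulrC ler_wpM2l ?powR_ge0 // -size_filter.
have := @bucket_size_le (w / 2) [seq i <- s | P i] c x r.
rewrite (_ : 2 * (w / 2) = w); last by field.
apply => //.
- exact: divr_gt0.
- exact: filter_uniq.
- by move=> i j; rewrite !mem_filter => /andP[_ is_] /andP[_ js]; exact: disj.
- move=> i; rewrite mem_filter => /andP[/andP[r1 r2] is_]; have [xF xi] := hs i is_.
  by split => //; rewrite (_ : w / 2 / 2 = w / 4) //; field.
Qed.

(* sort the balls into the dyadic classes [w_k / 4 < r <= w_k / 2], [w_k = e 2^-k] *)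
Lemma uncentered_sum_le (be e : R) (s : seq nat) (c x : nat -> pt) (r : nat -> R) :
  al < be -> 0 < e -> e <= e0 -> uniq s ->
  (forall i j, i \in s -> j \in s -> i <> j -> eball (c i) (r i) `&` eball (c j) (r j) = set0) ->
  (forall i, i \in s -> [/\ 0 < r i, 2 * r i <= e, F (x i) & edist (c i) (x i) < r i]) ->
  \sum_(i <- s) diam (eball (c i) (r i)) `^ be <= K * e `^ (be - al) / (1 - 2^-1 `^ (be - al)).
Proof.
move=> al_lt e_gt0 e_le uniq_s disj hs.
have be_ge0 : 0 <= be by apply: le_trans al_ge0 (ltW al_lt).
set g := be - al; have g_gt0 : 0 < g by rewrite subr_gt0.
pose w k := e * 2^-1 ^+ k.
have w_gt0 k : 0 < w k by rewrite mulr_gt0 // exprn_gt0 // invr_gt0.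
have w_le k : w k <= e0.
  apply: le_trans e_le; rewrite -[X in _ <= X]mulr1; apply: ler_wpM2l; first exact: ltW.
  by rewrite exprn_ile1 ?invr_ge0 ?invf_le1 ?ler1n.
pose P k i := (w k / 4 < r i) && (r i <= w k / 2).
have [N bucket] : exists N, forall i, i \in s -> exists2 k, (k < N)%N & P k i.
  apply: bounded_witnesses => i is_; have [r0 re _ _] := hs i is_.
  have [|k [k1 k2]] := dyadic_bucket e_gt0 r0 (_ : r i <= e / 2); first lra.
  by exists k; apply/andP.
have sum_le : \sum_(i <- s) diam (eball (c i) (r i)) `^ be <=
    \sum_(i <- s) \sum_(k < N) (P k i)%:R * w k `^ be.
  rewrite big_seq [X in _ <= X]big_seq; apply: ler_sum => i is_.
  have [k kN Pki] := bucket i is_; have [r0 _ _ _] := hs i is_.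
  rewrite (bigD1 (Ordinal kN)) //= Pki mul1r ler_wpDr ?sumr_ge0 //.
    by move=> j _; rewrite mulr_ge0 ?powR_ge0.
  rewrite diam_eball //; apply: ge0_ler_powR; rewrite ?nnegrE //.
  - by rewrite mulr_ge0 // ltW.
  - exact: ltW (w_gt0 k).
  - by move/andP: Pki => [_ ?]; lra.
apply: (le_trans sum_le); rewrite exchange_big /=.
under eq_bigr => k _ do rewrite sumr_nat_count.
have bucket_le k : (count (P k) s)%:R * w k `^ be <= K * w k `^ g.
  apply: (@bucket_sum_le be (w k) s c x r) => //; first exact: ltW.
  by move=> i is_; have [_ _ ? ?] := hs i is_.
apply: le_trans (ler_sum _ (fun (k : 'I_N) _ => bucket_le k)) _.
rewrite -mulr_sumr -mulrA ler_wpM2l //.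
under eq_bigr => k _ do rewrite (powR_mul_halfX _ _ (ltW e_gt0)).
by rewrite -mulr_sumr ler_wpM2l ?powR_ge0 // geometric_sum_le // powR_ge0 halfpowR_lt1.
Qed.

Lemma Peps_uncentered_le (be e : R) : al < be -> 0 < e -> e <= e0 ->
  (Peps false be e F <= (K * e `^ (be - al) / (1 - 2^-1 `^ (be - al)))%:E)%E.
Proof.
move=> al_lt e_gt0 e_le.
apply/ereal_supP => _ [I [c [r [[r_gt0 [diam_le [disj meet]]] ->]]]].
have /choice[x hx] : forall i, exists y, I i -> eball (c i) (r i) y /\ F y.
  move=> i; have [Ii|notIi] := pselect (I i); last by exists (c i).
  by have [y yAF] := meet i Ii; exists y.
rewrite /esum; apply/ereal_supP => _ [A [finA AI] <-].
rewrite fsbig_finite // sumEFin lee_fin.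
have A_I i : i \in finmap.enum_fset (fset_set A) -> I i.
  by rewrite in_fset_set // => /set_mem; exact: AI.
apply: (@uncentered_sum_le be e _ c x r) => //.
- exact: finmap.fset_uniq.
- by move=> i j iA jA; apply: disj; exact: A_I.
- move=> i /A_I Ii; have [xi xF] := hx i Ii.
  split => //; first exact: r_gt0.
  by rewrite -(diam_eball (c i) n_gt0 (r_gt0 i Ii)); exact: diam_le.
Qed.

End UncenteredBound.

Lemma P0_uncentered_dim0 (R : realType) (n : nat) (be : R) (F : set 'rV[R]_n) :
  n = 0%N -> 0 < be -> P0 false be F = 0%E.
Proof.
move=> n0 be_gt0; apply/eqP; rewrite eq_le P0_ge0 andbT.
apply: le_trans (P0_le_Peps _ _ _ ltr01) _.
apply/ereal_supP => _ [I [c [r [[r_gt0 _] ->]]]].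
by rewrite esum1 // => i Ii; rewrite diam_eball_dim0 ?r_gt0 // powR0 ?gt_eqF.
Qed.

Lemma P0_uncentered_eq0 (R : realType) (n : nat) (al be : R) (F : set 'rV[R]_n) :
  0 <= al -> al < be -> (P0 true al F < 1)%E -> P0 false be F = 0%E.
Proof.
move=> al_ge0 al_lt P0_lt1.
have [n0|n_gt0] := posnP n; first by apply: P0_uncentered_dim0 => //; exact: le_lt_trans al_lt.
have [e0 e0_gt0 Peps_lt1] := P0_lt_Peps P0_lt1.
apply/eqP; rewrite eq_le P0_ge0 andbT; apply/lee_addgt0Pr => d d_gt0; rewrite add0e.
set g := be - al; have g_gt0 : 0 < g by rewrite subr_gt0.
set C := ((12 * n).+1 ^ n)%:R / (1 - 2^-1 `^ g).
have C_gt0 : 0 < C by rewrite divr_gt0 ?ltr0n ?expn_gt0 // subr_gt0 halfpowR_lt1.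
set t := (d / C) `^ g^-1; have t_gt0 : 0 < t by rewrite powR_gt0 // divr_gt0.
set e := Num.min e0 t; have e_gt0 : 0 < e by rewrite lt_min e0_gt0 t_gt0.
have e_le : e <= e0 by rewrite ge_min lexx.
apply: le_trans (P0_le_Peps _ _ _ e_gt0) _.
apply: le_trans (Peps_uncentered_le n_gt0 al_ge0 Peps_lt1 al_lt e_gt0 e_le) _.
have e_pow_le : e `^ g <= d / C.
  have -> : d / C = t `^ g.
    by rewrite -powRrM mulVf ?gt_eqF // powRr1 // divr_ge0 // ltW.
  by apply: ge0_ler_powR; rewrite ?nnegrE ?ge_min ?lexx ?orbT // ltW.
rewrite lee_fin -/g mulrAC -/C.
apply: le_trans (ler_wpM2l (ltW C_gt0) e_pow_le) _.
by rewrite mulrC divfK ?gt_eqF.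
Qed.

Lemma Pmeas_uncentered_eq0 (R : realType) (n : nat) (al be : R) (E : set 'rV[R]_n) :
  0 <= al -> al < be -> Pmeas true al E = 0%E -> Pmeas false be E = 0%E.
Proof.
move=> al_ge0 al_lt Pmeas0.
have /ereal_inf_lt[_ [F [cover ->]] sum_lt1] : (Pmeas true al E < 1)%E by rewrite Pmeas0 lte01.
apply/eqP; rewrite eq_le Pmeas_ge0 andbT.
apply: ge_ereal_inf; exists 0%E => //; exists F; split => //.
rewrite eseries0 // => j _ _; apply: (P0_uncentered_eq0 al_ge0 al_lt).
apply: le_lt_trans sum_lt1.
apply: le_trans (@nneseries_lim_ge _ _ xpredT 0 j.+1 _); last by move=> i _ _; exact: P0_ge0.
by rewrite big_nat_recr //= leeDr // sume_ge0 // => i _; exact: P0_ge0.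
Qed.

Theorem corollary1 (R : realType) (n : nat) (E : set 'rV[R]_n) :
  dimP_unc E = dimP E.
Proof.
apply/eqP; rewrite eq_le; apply/andP; split; apply/ereal_infP => _ [a [a_ge0 Pa0] <-].
- apply/lee_addgt0Pr => e e_gt0; rewrite -EFinD; apply: ereal_inf_lbound.
  exists (a + e); last by [].
  split; first by rewrite addr_ge0 // ltW.
  by apply: (Pmeas_uncentered_eq0 a_ge0 _ Pa0); rewrite ltrDl.
- apply: ereal_inf_lbound; exists a; last by [].
  split; first exact: a_ge0.
  by apply/eqP; rewrite eq_le Pmeas_ge0 andbT -Pa0 Pmeas_centered_le.
Qed.
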